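(* Let $G$ be an undirected graph on $n$ vertices with nonnegative edge weights, let $0<\epsilon<1$, and let $\widehat{G}$ be an $\epsilon$-spectral sparsifier of $G$. Let $\mu_1\geq\cdots\geq\mu_n$ be the eigenvalues of $L_G$ with respective eigenvectors $x_1,\dots,x_n$, and let $\widehat{\mu}_1\geq\cdots\geq\widehat{\mu}_n$ be the eigenvalues of $L_{\widehat{G}}$ with respective eigenvectors $\widehat{x}_1,\dots,\widehat{x}_n$. Then 1. $\|L_G-L_{\widehat{G}}\|\leq\epsilon\,\rho(L_G)$, and 2. if $\theta_i$ is the angle between $x_i$ and $\widehat{x}_i$, then \[ \sin\theta_i\leq\frac{\epsilon\,\rho(L_G)}{\min\{|\mu_i-\widehat{\mu}_{i-1}|,\ |\mu_i-\widehat{\mu}_{i+1}|\}}, \] where it is assumed that $|\mu_i-\widehat{\mu}_{i\pm1}|\neq 0$ for all $i=1,\dots,n$.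
   Context: For a simple undirected graph $G$ on vertices $v_1,\dots,v_n$ with edge weights $w_{ij}\geq 0$ (and $w_{ij}=0$ for non-edges), the adjacency matrix is $(A_G)_{ij}=w_{ij}$ for $i\neq j$, $(A_G)_{ii}=0$; the degree matrix $D_G$ is diagonal with $(D_G)_{ii}=\sum_j w_{ij}$; the Laplacian is $L_G=D_G-A_G$. For $\epsilon\in(0,1)$, a weighted graph $\widehat{G}$ on the same vertex set is an $\epsilon$-spectral sparsifier of $G$ if $(1-\epsilon)x^TL_Gx\leq x^TL_{\widehat{G}}x\leq(1+\epsilon)x^TL_Gx$ for all $x\in\mathbb{R}^n$. $\|\cdot\|$ is the spectral (2-)norm and $\rho(\cdot)$ the spectral radius. For the boundary indices the conventions $\widehat{\mu}_0=+\infty$, $\widehat{\mu}_{n+1}=-\infty$ are used. *)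

From HB Require Import structures.
From mathcomp Require Import all_boot all_order all_algebra.
From mathcomp Require Import all_classical all_reals all_analysis.
Set Implicit Arguments. Unset Strict Implicit. Unset Printing Implicit Defensive.
Import Order.TTheory GRing.Theory Num.Theory.
Local Open Scope ring_scope.
Local Open Scope classical_set_scope.

Section Defs.
Variables (R : realType) (n : nat).

(* A weighted simple undirected graph on vertices 'I_n, given by its weight
   matrix w (w i j = weight of edge {i,j}, 0 for non-edges). *)
Definition weight_graph (w : 'M[R]_n) : Prop :=
  [/\ w^T = w, forall i, w i i = 0 & forall i j, 0 <= w i j].

Definition adjacency (w : 'M[R]_n) : 'M[R]_n := \matrix_(i, j) (if i == j then 0 else w i j).
Definition degree (w : 'M[R]_n) : 'M[R]_n := diag_mx (\row_i \sum_j w i j).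
Definition laplacian (w : 'M[R]_n) : 'M[R]_n := degree w - adjacency w.

Definition qform (A : 'M[R]_n) (x : 'cV[R]_n) : R := (x^T *m A *m x) 0 0.
Definition dotv (x y : 'cV[R]_n) : R := (x^T *m y) 0 0.
Definition normv (x : 'cV[R]_n) : R := Num.sqrt (dotv x x).

Definition spectral_sparsifier (eps : R) (w wh : 'M[R]_n) : Prop :=
  forall x : 'cV[R]_n,
    (1 - eps) * qform (laplacian w) x <= qform (laplacian wh) x /\
    qform (laplacian wh) x <= (1 + eps) * qform (laplacian w) x.

Definition spec_norm (A : 'M[R]_n) : R :=
  sup [set normv (A *m x) | x in [set x : 'cV[R]_n | normv x = 1]].

(* spectral radius: largest modulus of an eigenvalue (for the symmetric
   matrices considered here all eigenvalues are real) *)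
Definition spec_radius (A : 'M[R]_n) : R :=
  sup [set `|a| | a in [set a : R | eigenvalue A a]].

Definition vangle (x y : 'cV[R]_n) : R := acos (dotv x y / (normv x * normv y)).

Definition sorted_spectrum (A : 'M[R]_n) (mu : 'I_n -> R) : Prop :=
  (forall i j : 'I_n, (i <= j)%N -> mu j <= mu i) /\
  char_poly A = \prod_(i < n) ('X - (mu i)%:P).

(* 1-based extension with mu_0 = +oo and mu_{n+1} = -oo *)
Definition ext_eig (mu : 'I_n -> R) (k : nat) : \bar R :=
  if k == 0%N then +oo%E
  else if @insub _ (fun m => (m < n)%N) 'I_n k.-1 is Some i then (mu i)%:E
  else -oo%E.

End Defs.

(* Both parts rest on the quadratic-form bound |x^T (L - L') x| <= eps rho(L) |x|^2,
   which follows from the sparsifier inequalities and x^T L x <= rho(L) |x|^2.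
   For a symmetric matrix such a bound caps every eigenvalue, which gives part 1;
   by Courant-Fischer it also moves each sorted eigenvalue by at most eps rho(L)
   (Weyl).  For part 2 we may assume the gap g exceeds eps rho(L), since sin <= 1;
   Weyl then propagates the gap from the neighbours mu'_(i-1), mu'_(i+1) to every
   other eigenvalue of L', so mu'_i is simple, and the Davis-Kahan argument in an
   eigenbasis of L' bounds the weight of x_i off the eigenvector x'_i by
   |(L' - mu_i) x_i| / g <= eps rho(L) |x_i| / g.  Real symmetric matrices are
   diagonalised unitarily over R[i] by the spectral theorem of MathComp. *)

From HB Require Import structures.
From mathcomp Require Import all_boot all_order all_algebra.
From mathcomp Require Import complex ring lra zify.
From mathcomp Require Import all_classical all_reals all_analysis.
Import Order.TTheory GRing.Theory Num.Theory.
Set Implicit Arguments. Unset Strict Implicit. Unset Printing Implicit Defensive.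
Local Open Scope ring_scope.

Lemma char_poly_similar (F : comNzRingType) n (Q P D : 'M[F]_n) :
  Q *m P = 1%:M -> char_poly (Q *m D *m P) = char_poly D.
Proof.
move=> QP.
have QP' : map_mx polyC Q *m map_mx polyC P = 1%:M by rewrite -map_mxM QP map_mx1.
rewrite /char_poly.
have -> : char_poly_mx (Q *m D *m P) =
    map_mx polyC Q *m char_poly_mx D *m map_mx polyC P.
  rewrite /char_poly_mx !map_mxM mulmxBr mulmxBl mul_mx_scalar -scalemxAl QP'.
  by rewrite scalemx1.
rewrite !det_mulmx mulrC mulrA -det_mulmx mulmx1C //.
by rewrite det1 mul1r.
Qed.

Lemma exists_nonzero_kernel (F : fieldType) m n (M : 'M[F]_(m, n)) :
  (\rank M < n)%N -> exists2 z : 'cV_n, z != 0 & M *m z = 0.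
Proof.
move=> rkM; have : kermx M^T != 0 by rewrite kermx_eq0 /row_free mxrank_tr ltn_eqF.
case/matrix0Pn => i [j kij]; exists (row i (kermx M^T))^T.
  by rewrite trmx_eq0; apply/matrix0Pn; exists 0, j; rewrite mxE.
by apply: trmx_inj; rewrite trmx_mul trmxK trmx0 -row_mul mulmx_ker row0.
Qed.

Lemma card_preim_perm_eq (T : finType) (U : eqType) (f g : T -> U) (P : pred U) :
  perm_eq [seq f x | x <- enum T] [seq g x | x <- enum T] ->
  #|[set x | P (f x)]| = #|[set x | P (g x)]|.
Proof.
have cnt h : #|[set x | P (h x)]| = count P [seq h x | x <- enum T].
  by rewrite count_map enumT cardsE cardE /enum_mem size_filter.
by move=> fg; rewrite !cnt (permP fg).
Qed.

Section SpectralDecomposition.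
Variable R : rcfType.
Local Notation C := R[i].
Local Notation mc M := (map_mx (real_complex R) M).
Local Open Scope sesquilinear_scope.
Local Open Scope complex_scope.

Lemma trmxC_mul m n p (A : 'M[C]_(m, n)) (B : 'M[C]_(n, p)) : (A *m B) ^t* = (B ^t*) *m (A ^t*).
Proof. by rewrite trmx_mul map_mxM. Qed.

Lemma conjC_real (r : R) : (r%:C)^*%R = r%:C.
Proof. exact: conjc_real. Qed.

Lemma trmxC_real m n (M : 'M[R]_(m, n)) : (mc M) ^t* = mc M^T.
Proof. by apply/matrixP => i j; rewrite !mxE conjC_real. Qed.

Definition cdot n (u v : 'cV[C]_n) : C := (u ^t* *m v) 0 0.
Definition cqform n (A : 'M[C]_n) (z : 'cV[C]_n) : C := (z ^t* *m A *m z) 0 0.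

Lemma cdotE n (u v : 'cV[C]_n) : cdot u v = \sum_k (u k 0)^* * v k 0.
Proof. by rewrite /cdot mxE; apply: eq_bigr => k _; rewrite !mxE. Qed.

Lemma cdot_ge0 n (u : 'cV[C]_n) : 0 <= cdot u u.
Proof. by rewrite cdotE; apply: sumr_ge0 => k _; rewrite -normCKC exprn_ge0. Qed.

Lemma cqformB n (A B : 'M[C]_n) z : cqform (A - B) z = cqform A z - cqform B z.
Proof.
by rewrite /cqform mulmxBr mulmxBl; set M := _ *m A *m z; set N := _ *m B *m z; rewrite !mxE.
Qed.

(* The rows of [U] are conjugated orthonormal eigenvectors of [A], so [U *m z]
   is the coordinate vector of [z] in that eigenbasis. *)
Definition spectral_decomp n (A : 'M[R]_n) (U : 'M[C]_n) (d : 'I_n -> R) :=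
  [/\ U *m U ^t* = 1%:M, U ^t* *m U = 1%:M &
      mc A = U ^t* *m diag_mx (\row_k (d k)%:C) *m U].

Lemma spectral_decompP n (A : 'M[R]_n) : A^T = A -> exists U d, spectral_decomp A U d.
Proof.
move=> symA.
have herm : mc A \is hermsymmx.
  apply/is_hermitianmxP; rewrite expr0 scale1r.
  by apply/matrixP => i j; rewrite !mxE conjC_real -[in LHS]symA mxE.
have /orthomx_spectralP eA := hermitian_normalmx herm.
have Pu := spectral_unitarymx (mc A).
have /mxOverP real := hermitian_spectral_diag_real herm.
set P := spectralmx _ in eA Pu; set sp := spectral_diag _ in eA real.
have PP : P *m P ^t* = 1%:M by apply/unitarymxP.
exists P, (fun k => complex.Re (sp 0 k)); split => //; first exact: mulmx1C.
rewrite {1}eA invmx_unitary //; congr (_ *m diag_mx _ *m _).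
by apply/rowP => k; rewrite !mxE RRe_real.
Qed.

Section Decomp.
Variables (n : nat) (A : 'M[R]_n) (U : 'M[C]_n) (d : 'I_n -> R).
Hypothesis dA : spectral_decomp A U d.

Lemma spectral_decomp_char_poly : char_poly A = \prod_(k < n) ('X - (d k)%:P).
Proof.
have [_ UU eA] := dA; apply: (@map_poly_inj _ _ (real_complex R)).
rewrite map_char_poly eA char_poly_similar // char_poly_trig ?diag_mx_is_trig //.
rewrite rmorph_prod; apply: eq_bigr => k _.
by rewrite !mxE eqxx mulr1n /= map_polyXsubC.
Qed.

Lemma spectral_decomp_perm_eq (alpha : 'I_n -> R) :
  char_poly A = \prod_(k < n) ('X - (alpha k)%:P) ->
  perm_eq [seq d k | k <- enum 'I_n] [seq alpha k | k <- enum 'I_n].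
Proof.
move=> cA; apply: prod_XsubC_eq; rewrite !big_map.
have e : \prod_(k < n) ('X - (d k)%:P) = \prod_(k < n) ('X - (alpha k)%:P).
  by rewrite -cA spectral_decomp_char_poly.
exact: e.
Qed.

Lemma spectral_decomp_eigen_index (alpha : 'I_n -> R) :
  char_poly A = \prod_(k < n) ('X - (alpha k)%:P) -> forall k, exists j, d k = alpha j.
Proof.
move=> cA k; have : d k \in [seq alpha j | j <- enum 'I_n].
  by rewrite -(perm_mem (spectral_decomp_perm_eq cA)) map_f ?mem_enum.
by case/mapP => j _ ->; exists j.
Qed.

Lemma spectral_decomp_simple_index (alpha : 'I_n -> R) (i : 'I_n) :
  char_poly A = \prod_(k < n) ('X - (alpha k)%:P) ->
  (forall k, k != i -> alpha k != alpha i) ->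
  exists k0, forall k, (d k == alpha i) = (k == k0).
Proof.
move=> cA simple; have [k0 K0] : exists k0, [set k | d k == alpha i] = [set k0].
  apply/cards1P; rewrite (card_preim_perm_eq (pred1 (alpha i)) (spectral_decomp_perm_eq cA)).
  rewrite -(cards1 i); apply/eqP/eq_card => k; rewrite !inE /=.
  by apply/idP/idP => [|/eqP -> //]; apply: contraTT; apply: simple.
by exists k0 => k; have /setP/(_ k) := K0; rewrite !inE.
Qed.

Lemma eigenvalue_spectral_decomp a : eigenvalue A a <-> exists k, a = d k.
Proof.
rewrite eigenvalue_root_char spectral_decomp_char_poly /root horner_prod; split.
  by case/prodf_eq0 => k _; rewrite hornerXsubC subr_eq0 => /eqP ->; exists k.
by case=> k ->; apply/prodf_eq0; exists k => //; rewrite hornerXsubC subrr.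
Qed.

Lemma cdot_spectral u v : cdot u v = cdot (U *m u) (U *m v).
Proof.
by have [_ UU _] := dA; rewrite /cdot trmxC_mul -mulmxA (mulmxA (U ^t*)) UU mul1mx.
Qed.

Lemma cdot_spectral_sum z : cdot z z = \sum_k `|(U *m z) k 0| ^+ 2.
Proof. by rewrite cdot_spectral cdotE; apply: eq_bigr => k _; rewrite normCKC. Qed.

Lemma spectral_coord_eq0 (z : 'cV[C]_n) : (forall k, (U *m z) k 0 = 0) -> z = 0.
Proof.
move=> Uz0; have [_ UU _] := dA; rewrite -[z]mul1mx -UU -mulmxA.
suff -> : U *m z = 0 by rewrite mulmx0.
by apply/matrixP => k j; rewrite ord1 Uz0 mxE.
Qed.

Lemma cqform_spectral z : cqform (mc A) z = \sum_k (d k)%:C * `|(U *m z) k 0| ^+ 2.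
Proof.
have [_ _ ->] := dA; rewrite /cqform !mulmxA -trmxC_mul -mulmxA mul_mx_diag mxE.
by apply: eq_bigr => k _; rewrite !mxE normCKC mulrCA mulrA.
Qed.

Lemma cdot_mul_spectral z :
  cdot (mc A *m z) (mc A *m z) = \sum_k (d k)%:C ^+ 2 * `|(U *m z) k 0| ^+ 2.
Proof.
have [UU _ eA] := dA; rewrite cdot_spectral {1 2}eA !mulmxA UU mul1mx -mulmxA cdotE.
by apply: eq_bigr => k _; rewrite mul_diag_mx !mxE rmorphM /= conjC_real normCKC; ring.
Qed.

Lemma spectral_decomp_shift (c : R) : spectral_decomp (A - c%:M) U (fun k => d k - c).
Proof.
have [UU UU' eA] := dA; split => //.
rewrite map_mxB eA map_scalar_mx /=.
have -> : (c%:C)%:M = U ^t* *m (c%:C)%:M *m U :> 'M[C]_n.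
  by rewrite mul_mx_scalar -scalemxAl UU' scalemx1.
rewrite -mulmxBl -mulmxBr; congr (_ *m _ *m _).
apply/matrixP => i j; rewrite !mxE; case: eqP => _ /=.
  by rewrite !mulr1n rmorphB.
by rewrite !mulr0n subr0.
Qed.

Lemma spectral_coord_eigen (z : 'cV[C]_n) (a : R) : mc A *m z = a%:C *: z ->
  forall k, (U *m z) k 0 != 0 -> d k = a.
Proof.
move=> ez k; have [UU _ eA] := dA; apply: contraNeq => dka.
have : U *m (mc A *m z) = U *m (a%:C *: z) by rewrite ez.
rewrite eA !mulmxA UU mul1mx -mulmxA -scalemxAr => /matrixP /(_ k 0).
rewrite mul_diag_mx !mxE => /eqP; rewrite -subr_eq0 -mulrBl mulf_eq0 subr_eq0.
by rewrite (inj_eq (@complexI _)) (negPf dka).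
Qed.

Lemma cqform_spectral_le (z : 'cV[C]_n) (m : R) :
  (forall k, (U *m z) k 0 != 0 -> d k <= m) ->
  cqform (mc A) z <= m%:C * cdot z z.
Proof.
move=> dm; rewrite cqform_spectral cdot_spectral_sum mulr_sumr; apply: ler_sum => k _.
have [->|nz] := eqVneq ((U *m z) k 0) 0; first by rewrite normr0 expr0n !mulr0.
by rewrite ler_wpM2r ?exprn_ge0 // lecR dm.
Qed.

Lemma cqform_spectral_ge (z : 'cV[C]_n) (m : R) :
  (forall k, (U *m z) k 0 != 0 -> m <= d k) ->
  m%:C * cdot z z <= cqform (mc A) z.
Proof.
move=> dm; rewrite cqform_spectral cdot_spectral_sum mulr_sumr; apply: ler_sum => k _.
have [->|nz] := eqVneq ((U *m z) k 0) 0; first by rewrite normr0 expr0n !mulr0.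
by rewrite ler_wpM2r ?exprn_ge0 // lecR dm.
Qed.

Lemma cqform_spectral_lt (z : 'cV[C]_n) (m : R) :
  z != 0 -> (forall k, (U *m z) k 0 != 0 -> d k < m) ->
  cqform (mc A) z < m%:C * cdot z z.
Proof.
move=> z0 dm; have [k nz] : exists k, (U *m z) k 0 != 0.
  apply/existsP; apply: contraNT z0 => /existsPn Uz0.
  by apply/eqP/spectral_coord_eq0 => k; apply/eqP/negPn/Uz0.
rewrite cqform_spectral cdot_spectral_sum mulr_sumr [X in _ < X](bigD1 k) //=.
rewrite [X in X < _](bigD1 k) //= ltr_leD //.
  by rewrite ltr_pM2r ?exprn_gt0 ?normr_gt0 // ltcR dm.
apply: ler_sum => l _; have [->|nzl] := eqVneq ((U *m z) l 0) 0.
  by rewrite normr0 expr0n !mulr0.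
by rewrite ler_wpM2r ?exprn_ge0 // lecR ltW ?dm.
Qed.

Lemma cdot_mul_spectral_le (m : R) : (forall k, `|d k| <= m) ->
  forall z, cdot (mc A *m z) (mc A *m z) <= (m ^+ 2)%:C * cdot z z.
Proof.
move=> dm z; rewrite cdot_mul_spectral cdot_spectral_sum mulr_sumr.
apply: ler_sum => k _; rewrite ler_wpM2r ?exprn_ge0 // -rmorphXn lecR.
by rewrite -real_normK ?num_real // lerXn2r ?nnegrE ?(le_trans _ (dm k)).
Qed.

End Decomp.

Lemma exists_vanishing_coords n (U V : 'M[C]_n) (S T : {set 'I_n}) :
  (n < #|S| + #|T|)%N ->
  exists2 z : 'cV[C]_n, z != 0 &
    (forall k, k \notin S -> (U *m z) k 0 = 0) /\ (forall k, k \notin T -> (V *m z) k 0 = 0).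
Proof.
pose rows (W : 'M[C]_n) (P : {set 'I_n}) := \matrix_(j < #|P|, l < n) W (enum_val j) l.
have rowsP W P z : rows W P *m z = 0 -> forall k, k \in P -> (W *m z) k 0 = 0.
  move=> /matrixP Wz k kP; have := Wz (enum_rank_in kP k) 0.
  by rewrite !mxE; under eq_bigr do rewrite mxE enum_rankK_in //.
move=> ST; have [|z z0] := @exists_nonzero_kernel _ _ _ (col_mx (rows U (~: S)) (rows V (~: T))).
  apply: leq_ltn_trans (rank_leq_row _) _.
  by move: ST; have := cardsC S; have := cardsC T; rewrite card_ord; lia.
rewrite mul_col_mx => /eqP; rewrite col_mx_eq0 => /andP[/eqP Uz /eqP Vz].
by exists z => //; split => k k_out; [apply: rowsP Uz _ _ | apply: rowsP Vz _ _]; rewrite inE.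
Qed.

(* Courant-Fischer by dimension counting: otherwise some nonzero [z] would have
   [A]-Rayleigh quotient [>= t] and [B]-Rayleigh quotient [< t - delta]. *)
Lemma weyl_count n (A B : 'M[R]_n) U d V e (delta t : R) :
  spectral_decomp A U d -> spectral_decomp B V e ->
  (forall z, cqform (mc A) z - cqform (mc B) z <= delta%:C * cdot z z) ->
  (#|[set k | (t <= d k)%R]| + #|[set k | (e k < t - delta)%R]| <= n)%N.
Proof.
move=> dA dB AB; rewrite leqNgt; apply/negP => big.
have [z z0 [Uz Vz]] := exists_vanishing_coords U V big.
have geA : t%:C * cdot z z <= cqform (mc A) z.
  apply: (cqform_spectral_ge dA) => k; apply: contraNT => dk.
  by apply/eqP/Uz; rewrite inE.
have ltB : cqform (mc B) z < (t - delta)%:C * cdot z z.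
  apply: (cqform_spectral_lt dB z0) => k; apply: contraNT => ek.
  by apply/eqP/Vz; rewrite inE.
suff : t%:C * cdot z z < t%:C * cdot z z by rewrite ltxx.
apply: (le_lt_trans geA); have := AB z; rewrite lerBlDl => /le_lt_trans; apply.
by rewrite -ltrBrDr -mulrBl -rmorphB.
Qed.

Lemma weyl_sorted n (A B : 'M[R]_n) U d V e (alpha beta : 'I_n -> R) (delta : R) :
  spectral_decomp A U d -> spectral_decomp B V e ->
  {homo alpha : i j / (i <= j)%N >-> j <= i} -> {homo beta : i j / (i <= j)%N >-> j <= i} ->
  char_poly A = \prod_(k < n) ('X - (alpha k)%:P) ->
  char_poly B = \prod_(k < n) ('X - (beta k)%:P) ->
  (forall z, cqform (mc A) z - cqform (mc B) z <= delta%:C * cdot z z) ->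
  forall j, alpha j - delta <= beta j.
Proof.
move=> dA dB sa sb cA cB AB j; rewrite leNgt; apply/negP => bj.
have W := weyl_count (alpha j) dA dB AB.
rewrite (card_preim_perm_eq (fun x => alpha j <= x) (spectral_decomp_perm_eq dA cA)) in W.
rewrite (card_preim_perm_eq (fun x => x < alpha j - delta) (spectral_decomp_perm_eq dB cB)) in W.
have s1 : [set k : 'I_n | (k <= j)%N] \subset [set k | alpha j <= alpha k].
  by apply/fintype.subsetP => k; rewrite !inE => /sa.
have s2 : [set k : 'I_n | (j <= k)%N] \subset [set k | beta k < alpha j - delta].
  by apply/fintype.subsetP => k; rewrite !inE => /sb kj; apply: le_lt_trans kj bj.
have split : (#|[set k : 'I_n | (k <= j)%N]| + #|[set k : 'I_n | (j <= k)%N]| = n.+1)%N.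
  rewrite -cardsUI.
  have -> : [set k : 'I_n | (k <= j)%N] :|: [set k : 'I_n | (j <= k)%N] = [set: 'I_n].
    by apply/setP => k; rewrite !inE leq_total.
  have -> : [set k : 'I_n | (k <= j)%N] :&: [set k : 'I_n | (j <= k)%N] = [set j].
    by apply/setP => k; rewrite !inE -eqn_leq.
  by rewrite cardsT cards1 card_ord addn1.
have := leq_trans (leq_add (subset_leq_card s1) (subset_leq_card s2)) W.
by rewrite split ltnn.
Qed.

(* In the eigenbasis of [B], every coordinate of [z] other than the one of the
   simple eigenvalue [beta i] is weighted by at least [g^2] in [|(B - mu) z|^2]. *)
Lemma davis_kahan_coords n (B : 'M[R]_n) V e (beta : 'I_n -> R) (i : 'I_n)
    (z y : 'cV[C]_n) (mu delta g : R) :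
  spectral_decomp B V e -> char_poly B = \prod_(k < n) ('X - (beta k)%:P) ->
  (forall k, k != i -> beta k != beta i) -> (forall k, k != i -> g <= `|beta k - mu|) ->
  0 <= g -> mc B *m y = (beta i)%:C *: y ->
  cdot (mc (B - mu%:M) *m z) (mc (B - mu%:M) *m z) <= (delta ^+ 2)%:C * cdot z z ->
  (g ^+ 2 - delta ^+ 2)%:C * cdot z z * cdot y y <= (g ^+ 2)%:C * `|cdot z y| ^+ 2 /\
  `|cdot z y| ^+ 2 <= cdot z z * cdot y y.
Proof.
move=> dB cB simple gap g0 ey near.
have [k0 ek0] := spectral_decomp_simple_index dB cB simple.
set w := V *m z; set w' := V *m y.
have w'0 k : k != k0 -> w' k 0 = 0.
  move=> kk0; apply/eqP; apply: contraNT kk0 => /(spectral_coord_eigen dB ey) ekb.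
  by rewrite -ek0 ekb.
have hy : cdot y y = `|w' k0 0| ^+ 2.
  rewrite (cdot_spectral_sum dB) (bigD1 k0) //= big1 ?addr0 // => k /w'0 ->.
  by rewrite normr0 expr0n.
have hzy : cdot z y = (w k0 0)^* * w' k0 0.
  by rewrite (cdot_spectral dB) cdotE (bigD1 k0) //= big1 ?addr0 // => k /w'0 ->; rewrite mulr0.
have hz : cdot z z = `|w k0 0| ^+ 2 + \sum_(k | k != k0) `|w k 0| ^+ 2.
  by rewrite (cdot_spectral_sum dB) (bigD1 k0).
have tail : (g ^+ 2)%:C * \sum_(k | k != k0) `|w k 0| ^+ 2 <= (delta ^+ 2)%:C * cdot z z.
  apply: le_trans near; rewrite (cdot_mul_spectral (spectral_decomp_shift dB mu)).
  rewrite mulr_sumr [X in _ <= X](bigD1 k0) //= -[X in X <= _]add0r lerD //.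
    by apply: mulr_ge0; [rewrite -rmorphXn ler0c sqr_ge0 | rewrite exprn_ge0].
  apply: ler_sum => k kk0; rewrite ler_wpM2r ?exprn_ge0 // -rmorphXn lecR.
  have [j ekj] := spectral_decomp_eigen_index dB cB k.
  have ji : j != i by apply: contraNneq kk0 => ji; rewrite -ek0 ekj ji.
  rewrite ekj -[(beta j - mu) ^+ 2]real_normK ?num_real //.
  by rewrite lerXn2r ?nnegrE ?normr_ge0 ?gap.
rewrite hzy normrM norm_conjC exprMn -hy; split.
  rewrite mulrA ler_wpM2r ?cdot_ge0 // rmorphB mulrBl lerBlDr [in X in X <= _]hz.
  by rewrite mulrDr lerD2l.
by rewrite ler_wpM2r ?cdot_ge0 // hz lerDl sumr_ge0 // => k _; rewrite exprn_ge0.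
Qed.

End SpectralDecomposition.

Section RealSymmetric.
Variable R : realType.
Local Notation C := R[i].
Local Notation mc M := (map_mx (real_complex R) M).
Local Open Scope sesquilinear_scope.
Local Open Scope complex_scope.

Lemma cdot_real n (x y : 'cV[R]_n) : cdot (mc x) (mc y) = (dotv x y)%:C.
Proof. by rewrite /cdot trmxC_real -map_mxM mxE. Qed.

Lemma cqform_real n (A : 'M[R]_n) (x : 'cV[R]_n) : cqform (mc A) (mc x) = (qform A x)%:C.
Proof. by rewrite /cqform trmxC_real -!map_mxM mxE. Qed.

Lemma normC_real (r : R) : `|r%:C| ^+ 2 = (r ^+ 2)%:C.
Proof. by rewrite normCK conjC_real -rmorphM expr2. Qed.

Lemma dotvE n (x : 'cV[R]_n) : dotv x x = \sum_k x k 0 ^+ 2.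
Proof. by rewrite /dotv mxE; apply: eq_bigr => k _; rewrite mxE expr2. Qed.

Lemma dotv_ge0 n (x : 'cV[R]_n) : 0 <= dotv x x.
Proof. by rewrite dotvE sumr_ge0 // => k _; rewrite sqr_ge0. Qed.

Lemma dotv_gt0 n (x : 'cV[R]_n) : x != 0 -> 0 < dotv x x.
Proof.
move=> x0; have [k xk] : exists k, x k 0 != 0.
  apply/existsP; apply: contraNT x0 => /existsPn x0.
  by apply/eqP/matrixP => k j; rewrite ord1 mxE; apply/eqP/negPn/x0.
rewrite dotvE (bigD1 k) //= ltr_pwDl ?exprn_even_gt0 //.
by rewrite sumr_ge0 // => l _; rewrite sqr_ge0.
Qed.

Lemma qformB n (A B : 'M[R]_n) x : qform (A - B) x = qform A x - qform B x.
Proof.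
by rewrite /qform mulmxBr mulmxBl; set M := _ *m A *m x; set N := _ *m B *m x; rewrite !mxE.
Qed.

Lemma spectral_decomp_rayleigh n (A : 'M[R]_n) U d : spectral_decomp A U d ->
  forall k, exists2 v : 'cV[R]_n, 0 < dotv v v & qform A v = d k * dotv v v.
Proof.
move=> dA k; have /eigenvalueP [v vA v0] : eigenvalue A (d k).
  by apply/(eigenvalue_spectral_decomp dA); exists k.
exists v^T; first by rewrite dotv_gt0 ?trmx_eq0.
by rewrite /qform /dotv trmxK vA -scalemxAl mxE.
Qed.

Lemma weyl_qform n (A B : 'M[R]_n) (alpha beta : 'I_n -> R) (delta : R) :
  A^T = A -> B^T = B -> sorted_spectrum A alpha -> sorted_spectrum B beta ->
  (forall x, qform A x - qform B x <= delta * dotv x x) ->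
  forall j, alpha j - delta <= beta j.
Proof.
move=> sA sB [sa cA] [sb cB] AB.
have [U [d dA]] := spectral_decompP sA; have [V [e dB]] := spectral_decompP sB.
have [W [f dE]] : exists W f, spectral_decomp (A - B) W f.
  by apply: spectral_decompP; rewrite linearB /= sA sB.
apply: (weyl_sorted dA dB sa sb cA cB) => z.
rewrite -cqformB -map_mxB; apply: (cqform_spectral_le dE) => k _.
have [v v0 qv] := spectral_decomp_rayleigh dE k.
by rewrite -(ler_pM2r v0) -qv qformB AB.
Qed.

Lemma dotv_mul_le_qform n (E : 'M[R]_n) (delta : R) : E^T = E ->
  (forall x, `|qform E x| <= delta * dotv x x) ->
  forall x, dotv (E *m x) (E *m x) <= delta ^+ 2 * dotv x x.
Proof.
move=> sE qE x; have [W [f dE]] := spectral_decompP sE.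
have fb k : `|f k| <= delta.
  have [v v0 qv] := spectral_decomp_rayleigh dE k.
  by rewrite -(ler_pM2r v0) -(gtr0_norm v0) -normrM -qv (gtr0_norm v0).
by rewrite -lecR rmorphM /= -!cdot_real map_mxM (cdot_mul_spectral_le dE fb).
Qed.

Lemma spectral_decomp_spec_radius n (A : 'M[R]_n) U d : spectral_decomp A U d ->
  (forall k, `|d k| <= spec_radius A) /\ 0 <= spec_radius A.
Proof.
move=> dA; set S := [set `|a| | a in [set a : R | eigenvalue A a]]%classic.
have Sd k : S `|d k| by exists (d k) => //=; apply/(eigenvalue_spectral_decomp dA); exists k.
have ub : ubound S (\sum_k `|d k|).
  move=> _ [a /= /(eigenvalue_spectral_decomp dA) [k ->] <-].
  by rewrite (bigD1 k) //= lerDl sumr_ge0.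
have le_rho k : `|d k| <= spec_radius A.
  by apply: sup_upper_bound (Sd k); split; [exists `|d k| | exists (\sum_k `|d k|)].
split => //; case: n A U d dA S Sd ub le_rho => [|n] A U d dA S Sd ub le_rho.
  rewrite /spec_radius (_ : [set `|a| | a in _] = set0)%classic ?sup0 //.
  by apply/seteqP; split => // y [a /= + _]; rewrite /eigenvalue thinmx0 eqxx.
exact: le_trans (le_rho ord0).
Qed.

Lemma spec_radius_ge0 n (A : 'M[R]_n) : A^T = A -> 0 <= spec_radius A.
Proof. by case/spectral_decompP => U [d /spectral_decomp_spec_radius []]. Qed.

Lemma qform_le_spec_radius n (A : 'M[R]_n) : A^T = A ->
  forall x, qform A x <= spec_radius A * dotv x x.
Proof.
case/spectral_decompP => U [d dA] x; have [le_rho _] := spectral_decomp_spec_radius dA.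
rewrite -lecR -cqform_real rmorphM /= -cdot_real.
by apply: (cqform_spectral_le dA) => k _; apply: le_trans (ler_norm _) (le_rho k).
Qed.

Lemma spec_norm_le n (A : 'M[R]_n) (c : R) : 0 <= c ->
  (forall x, dotv (A *m x) (A *m x) <= c ^+ 2 * dotv x x) -> spec_norm A <= c.
Proof.
move=> c0 Ac; rewrite /spec_norm.
set S := [set normv (A *m x) | x in [set x : 'cV[R]_n | normv x = 1]]%classic.
have [[t St]|S0] := pselect (exists t, S t); last first.
  rewrite (_ : S = set0) ?sup0 //.
  by apply/seteqP; split => // t St; exfalso; apply: S0; exists t.
apply: ge_sup; first by exists t.
move=> _ [x /= x1 <-]; have xx : dotv x x = 1.
  by move: (sqr_sqrtr (dotv_ge0 x)); rewrite -/(normv x) x1 expr1n.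
rewrite /normv -(ger0_norm c0) -sqrtr_sqr ler_wsqrtr //.
by rewrite -[c ^+ 2]mulr1 -xx Ac.
Qed.

Lemma sin_vangle_le n (x y : 'cV[R]_n) (s : R) : x != 0 -> y != 0 -> 0 <= s ->
  dotv x y ^+ 2 <= dotv x x * dotv y y ->
  (1 - s ^+ 2) * (dotv x x * dotv y y) <= dotv x y ^+ 2 ->
  sin (vangle x y) <= s.
Proof.
move=> x0 y0 s0 cs hs; have pxy := mulr_gt0 (dotv_gt0 x0) (dotv_gt0 y0).
rewrite /vangle /normv -sqrtrM ?dotv_ge0 //; set c := dotv x y / _.
have c2 : c ^+ 2 = dotv x y ^+ 2 / (dotv x x * dotv y y).
  by rewrite /c expr_div_n sqr_sqrtr // ltW.
have c1 : c ^+ 2 <= 1 by rewrite c2 ler_pdivrMr // mul1r.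
have c3 : 1 - s ^+ 2 <= c ^+ 2 by rewrite c2 ler_pdivlMr.
have hc : -1 <= c <= 1 by apply/andP; split; nra.
rewrite sin_acos // -[s]ger0_norm // -sqrtr_sqr ler_wsqrtr //; lra.
Qed.

Lemma sorted_neighbour_gap n (alpha beta : 'I_n -> R) (i : 'I_n) (delta g : R) :
  {homo alpha : i j / (i <= j)%N >-> j <= i} -> {homo beta : i j / (i <= j)%N >-> j <= i} ->
  (forall j, `|alpha j - beta j| <= delta) -> delta < g ->
  (forall k : 'I_n, k.+1 = i -> g <= `|alpha i - beta k|) ->
  (forall k : 'I_n, k = i.+1 :> nat -> g <= `|alpha i - beta k|) ->
  forall k, k != i -> g <= `|beta k - alpha i|.
Proof.
move=> sa sb ab dg lo hi k; case: (ltngtP k i) => [ki _|ik _|/val_inj -> /eqP //].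
  have ji : (i.-1 < n)%N := leq_ltn_trans (leq_pred i) (ltn_ord i).
  have j1 : (Ordinal ji).+1 = i by rewrite /= prednK // (leq_ltn_trans _ ki).
  have := lo _ j1; have := ab (Ordinal ji); have := sa (Ordinal ji) i (leq_pred i).
  have kj : (k <= Ordinal ji)%N by rewrite -ltnS j1.
  have := sb k (Ordinal ji) kj.
  rewrite ler_norml !ler_normr => ? ? /andP[? ?] /orP[?|?]; apply/orP; left; lra.
have ji : (i.+1 < n)%N := leq_ltn_trans ik (ltn_ord k).
have := hi (Ordinal ji) erefl; have := ab (Ordinal ji); have := sa i (Ordinal ji) (leqnSn i).
have := sb (Ordinal ji) k ik.
rewrite ler_norml !ler_normr => ? ? /andP[? ?] /orP[?|?]; apply/orP; right; lra.
Qed.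

Lemma sin_vangle_eigvec_le n (A B : 'M[R]_n) (alpha beta : 'I_n -> R) (i : 'I_n)
    (x y : 'cV[R]_n) (delta g : R) :
  A^T = A -> B^T = B -> sorted_spectrum A alpha -> sorted_spectrum B beta ->
  (forall z, `|qform (A - B) z| <= delta * dotv z z) ->
  x != 0 -> A *m x = alpha i *: x -> y != 0 -> B *m y = beta i *: y -> 0 < g ->
  (forall k : 'I_n, k.+1 = i -> g <= `|alpha i - beta k|) ->
  (forall k : 'I_n, k = i.+1 :> nat -> g <= `|alpha i - beta k|) ->
  sin (vangle x y) <= delta / g.
Proof.
move=> sA sB [sa cA] [sb cB] qE x0 Ax y0 By g0 lo hi.
have delta0 : 0 <= delta.
  by rewrite -(pmulr_lge0 _ (dotv_gt0 x0)) (le_trans _ (qE x)).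
have [gd|dg] := leP g delta.
  by rewrite (le_trans (sin_le1 _)) // ler_pdivlMr // mul1r.
have qE' z : `|qform (B - A) z| <= delta * dotv z z by rewrite qformB distrC -qformB.
have w1 j : alpha j - delta <= beta j.
  by apply: (weyl_qform sA sB (conj sa cA) (conj sb cB)) => z; rewrite -qformB ler_normlW ?qE.
have w2 j : beta j - delta <= alpha j.
  by apply: (weyl_qform sB sA (conj sb cB) (conj sa cA)) => z; rewrite -qformB ler_normlW ?qE'.
have ab j : `|alpha j - beta j| <= delta.
  by have := w1 j; have := w2 j; rewrite ler_norml => ? ?; apply/andP; split; lra.
have gap := sorted_neighbour_gap sa sb ab dg lo hi.
have simple k : k != i -> beta k != beta i.
  move=> ki; apply: contraTneq (gap k ki) => ->.
  by rewrite -ltNge (le_lt_trans _ dg) // distrC ab.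
have [V [e dB]] := spectral_decompP sB.
have sBA : (B - A)^T = B - A by rewrite linearB /= sA sB.
have near : cdot (mc (B - (alpha i)%:M) *m mc x) (mc (B - (alpha i)%:M) *m mc x)
    <= (delta ^+ 2)%:C * cdot (mc x) (mc x).
  rewrite -map_mxM mulmxBl mul_scalar_mx -Ax -mulmxBl !cdot_real -rmorphM lecR.
  exact: dotv_mul_le_qform sBA qE' x.
have ey : mc B *m mc y = (beta i)%:C *: mc y by rewrite -map_mxM By map_mxZ.
have [] := davis_kahan_coords dB cB simple gap (ltW g0) ey near.
rewrite !cdot_real normC_real -!rmorphM !lecR => D1 D2.
apply: sin_vangle_le => //; first by rewrite divr_ge0 // ltW.
rewrite -(ler_pM2l (exprn_gt0 2 g0)).
have -> : g ^+ 2 * ((1 - (delta / g) ^+ 2) * (dotv x x * dotv y y)) =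
    (g ^+ 2 - delta ^+ 2) * dotv x x * dotv y y by field; rewrite gt_eqF.
exact: D1.
Qed.

Lemma ext_eig_gap n (mu : 'I_n -> R) (a g : R) (j : nat) :
  (g%:E <= `|a%:E - ext_eig mu j|)%E -> forall k : 'I_n, k.+1 = j -> g <= `|a - mu k|.
Proof.
move=> + k kj; rewrite -kj /ext_eig /=; case: insubP => [k' _ kk'|]; last by rewrite ltn_ord.
by rewrite (_ : k' = k) ?lee_fin //; apply: val_inj.
Qed.

(* At the boundary indices a neighbour gap is [+oo], and [c / +oo = 0]. *)
Lemma lee_div_min_gap (s c : R) (a b : \bar R) : 0 <= c -> (0 < a)%E -> (0 < b)%E ->
  (forall g : R, 0 < g -> (g%:E <= a)%E -> (g%:E <= b)%E -> s <= c / g) ->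
  (s%:E <= c%:E / Order.min a b)%E.
Proof.
move=> c0 a0 b0 sc.
have : [/\ (0 < Order.min a b)%E, (Order.min a b <= a)%E & (Order.min a b <= b)%E].
  by rewrite lt_min a0 b0 !ge_min !lexx orbT.
case: (Order.min a b) => [r | | ] [r0 ra rb] //.
  by rewrite lte_fin in r0; rewrite inver gt_eqF // -EFinM lee_fin sc.
rewrite invey mule0 lee_fin leNgt; apply/negP => s0.
have g0 : 0 < (c + 1) / s by rewrite divr_gt0 // ltr_wpDl.
have := sc _ g0 (le_trans (leey _) ra) (le_trans (leey _) rb).
by rewrite invf_div mulrA ler_pdivlMr ?ltr_wpDl // => ?; nra.
Qed.

Lemma laplacian_sym n (w : 'M[R]_n) : weight_graph w -> (laplacian w)^T = laplacian w.
Proof.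
case=> wT _ _; rewrite /laplacian linearB /= /degree tr_diag_mx; congr (_ - _).
apply/matrixP => i j; rewrite !mxE eq_sym; case: eqP => // _.
by rewrite -[in RHS]wT mxE.
Qed.

Lemma sparsifier_qform_le n (eps : R) (w wh : 'M[R]_n) : spectral_sparsifier eps w wh ->
  forall x, `|qform (laplacian w - laplacian wh) x| <= eps * qform (laplacian w) x.
Proof.
move=> sp x; have [lo hi] := sp x.
by rewrite qformB ler_norml; apply/andP; split; nra.
Qed.

End RealSymmetric.

Theorem lemma1 (R : realType) (n : nat) (w wh : 'M[R]_n) (eps : R)
  (mu muh : 'I_n -> R) (x xh : 'I_n -> 'cV[R]_n) :
  weight_graph w -> weight_graph wh ->
  0 < eps < 1 ->
  spectral_sparsifier eps w wh ->
  sorted_spectrum (laplacian w) mu ->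
  (forall i, x i != 0 /\ laplacian w *m x i = mu i *: x i) ->
  sorted_spectrum (laplacian wh) muh ->
  (forall i, xh i != 0 /\ laplacian wh *m xh i = muh i *: xh i) ->
  (forall i : 'I_n,
     (`|(mu i)%:E - ext_eig muh i|)%E != 0%E /\
     (`|(mu i)%:E - ext_eig muh i.+2|)%E != 0%E) ->
  spec_norm (laplacian w - laplacian wh) <= eps * spec_radius (laplacian w) /\
  (forall i : 'I_n,
     ((sin (vangle (x i) (xh i)))%:E <=
      (eps * spec_radius (laplacian w))%:E /
        Order.min (`|(mu i)%:E - ext_eig muh i|)%E
                  (`|(mu i)%:E - ext_eig muh i.+2|)%E)%E).
Proof.
move=> wg wgh /andP[eps0 _] sp sL xL sLh xLh gaps.
have symL := laplacian_sym wg; have symLh := laplacian_sym wgh.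
have delta0 : 0 <= eps * spec_radius (laplacian w).
  by apply: mulr_ge0; [exact: ltW | exact: spec_radius_ge0].
have qE y : `|qform (laplacian w - laplacian wh) y| <= eps * spec_radius (laplacian w) * dotv y y.
  rewrite -mulrA (le_trans (sparsifier_qform_le sp y)) // ler_wpM2l ?(ltW eps0) //.
  exact: qform_le_spec_radius.
have symE : (laplacian w - laplacian wh)^T = laplacian w - laplacian wh.
  by rewrite linearB /= symL symLh.
split; first exact: spec_norm_le delta0 (dotv_mul_le_qform symE qE).
move=> i; have [ga gb] := gaps i; have [xi0 Lxi] := xL i; have [yi0 Lyi] := xLh i.
apply: lee_div_min_gap; rewrite ?lt_def ?ga ?gb ?abse_ge0 // => g g0 glo ghi.
apply: (sin_vangle_eigvec_le symL symLh sL sLh qE xi0 Lxi yi0 Lyi g0).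
  exact: ext_eig_gap glo.
by move=> k ki; apply: (ext_eig_gap ghi); rewrite ki.
Qed.
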